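(* Let $G$ be a finite simple graph of order $n$ having no connected component of order less than $3$. Then $s_g(G)\leq s_g^*(G)\leq 2n$.
   Context: For an Abelian group $\mathcal{G}$ (identity $0$, $\mathcal{G}^*=\mathcal{G}\setminus\{0\}$) and a labeling $f\colon E(G)\to\mathcal{G}$, the weighted degree of a vertex $v$ is $w_f(v)=\sum_{u\in N(v)} f(uv)$. The labeling is $\mathcal{G}$-irregular if all weighted degrees are pairwise distinct. The group irregularity strength $s_g(G)$ is the least positive integer $k$ such that for every Abelian group $\mathcal{G}$ of order $k$ there exists a $\mathcal{G}$-irregular labeling $f\colon E(G)\to\mathcal{G}$. The nowhere-zero group irregularity strength $s_g^*(G)$ is the least positive integer $k$ such that for every Abelian group $\mathcal{G}$ of order $k$ there exists a $\mathcal{G}$-irregular labeling $f\colon E(G)\to\mathcal{G}^*$. *)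

From HB Require Import structures.
From mathcomp Require Import all_boot all_algebra.
Set Implicit Arguments. Unset Strict Implicit. Unset Printing Implicit Defensive.
Import GRing.Theory.
Local Open Scope ring_scope.

Definition simple_graph (T : finType) (e : rel T) : Prop :=
  symmetric e /\ irreflexive e.

(* An edge uv is the unordered pair [set u; v]; an edge labeling with values
   in A is a function on 2-subsets (only its values on edges matter). *)
Definition wdeg (T : finType) (e : rel T) (A : finZmodType)
  (f : {set T} -> A) (v : T) : A :=
  \sum_(u | e v u) f [set v; u].

Definition irregular (T : finType) (e : rel T) (A : finZmodType)
  (f : {set T} -> A) : Prop :=
  injective (wdeg e f).

Definition nowhere_zero (T : finType) (e : rel T) (A : finZmodType)
  (f : {set T} -> A) : Prop :=
  forall u v, e u v -> f [set u; v] != 0.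

Definition sg_prop (T : finType) (e : rel T) (k : nat) : Prop :=
  forall A : finZmodType, #|A| = k ->
    exists f : {set T} -> A, irregular e f.

Definition sgstar_prop (T : finType) (e : rel T) (k : nat) : Prop :=
  forall A : finZmodType, #|A| = k ->
    exists f : {set T} -> A, nowhere_zero e f /\ irregular e f.

Definition least_pos (P : nat -> Prop) (k : nat) : Prop :=
  (0 < k)%N /\ P k /\ forall j, (0 < j)%N -> (j < k)%N -> ~ P j.

Definition is_sg (T : finType) (e : rel T) (k : nat) : Prop := least_pos (sg_prop e) k.
Definition is_sgstar (T : finType) (e : rel T) (k : nat) : Prop := least_pos (sgstar_prop e) k.

Definition no_small_component (T : finType) (e : rel T) : Prop :=
  forall x : T, (3 <= #|[set y | connect e x y]|)%N.

From mathcomp Require Import all_boot all_algebra zify.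
From Stdlib Require Import Classical_Prop.
Set Implicit Arguments. Unset Strict Implicit. Unset Printing Implicit Defensive.
Import GRing.Theory.

(** Label the edges one at a time while carrying vertex offsets [c : T -> A],
    and prove more generally: if [2|V| <= |A| + 2] and [c] already takes
    distinct values on any two isolated vertices and on the two ends of any
    [K2] component, then some nowhere-zero labeling [f] makes [c + wdeg f]
    injective.  To remove an edge [uv], give it a label [t <> 0] and add [t]
    to [c u] and [c v]; the invariant survives as soon as [c u + t] and
    [c v + t] avoid the at most [2(|V| - 2)] values [c i], [i <> u, v], and
    such a [t] exists because [|A| > 2|V| - 3].  A graph without components
    of order less than 3 satisfies the invariant for [c = 0]. *)

Lemma eq_set2 (T : finType) (a b u v : T) :
  ([set a; b] == [set u; v]) = (a == u) && (b == v) || (a == v) && (b == u).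
Proof.
apply/eqP/idP => [/setP eq_ab|/orP[]/andP[/eqP-> /eqP->] //]; last exact: setUC.
have: [/\ a \in [set u; v], b \in [set u; v], u \in [set a; b] & v \in [set a; b]].
  by rewrite -(eq_ab a) -(eq_ab b) (eq_ab u) (eq_ab v) !inE !eqxx ?orbT.
by case=> /set2P[]-> /set2P[]-> /set2P[] ? /set2P[] ?; subst; rewrite ?eqxx ?orbT.
Qed.

Definition deg (T : finType) (E : rel T) (x : T) : nat := #|[set y | E x y]|.

Definition arcs (T : finType) (E : rel T) : {set T * T} := [set p | E p.1 p.2].

Definition remove_edge (T : finType) (E : rel T) (s : {set T}) : rel T :=
  fun a b => E a b && ([set a; b] != s).

Definition small_pair (T : finType) (E : rel T) (x y : T) : bool :=
  (x != y) &&
  ((deg E x == 0) && (deg E y == 0) || [&& E x y, deg E x == 1 & deg E y == 1]).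

Section EdgeRemoval.
Variables (T : finType) (E : rel T).
Hypotheses (symE : symmetric E) (irrE : irreflexive E).

Lemma remove_edge_sym s : symmetric (remove_edge E s).
Proof. by move=> a b; rewrite /remove_edge symE setUC. Qed.

Lemma remove_edge_irr s : irreflexive (remove_edge E s).
Proof. by move=> a; rewrite /remove_edge irrE. Qed.

Lemma edge_neq u v : E u v -> u != v.
Proof. by apply: contraTneq => ->; rewrite irrE. Qed.

Lemma card_arcs_remove_edge u v :
  E u v -> #|arcs (remove_edge E [set u; v])| < #|arcs E|.
Proof.
move=> Euv; apply/proper_card/properP; split.
  by apply/subsetP=> p; rewrite !inE => /andP[].
by exists (u, v); rewrite !inE /= ?Euv // /remove_edge eqxx andbF.
Qed.

Lemma deg_remove_edge_out u v w :
  w \notin [set u; v] -> deg (remove_edge E [set u; v]) w = deg E w.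
Proof.
move=> w_out; apply: eq_card => y; rewrite !inE /remove_edge eq_set2.
by move: w_out; rewrite !inE negb_or => /andP[/negbTE-> /negbTE->]; rewrite andbT.
Qed.

Lemma deg_remove_edge_end u v w : E u v ->
  w \in [set u; v] -> deg (remove_edge E [set u; v]) w = (deg E w).-1.
Proof.
suff deg_first a b : E a b -> deg (remove_edge E [set a; b]) a = (deg E a).-1.
  move=> Euv /set2P[]->; first exact: deg_first.
  by rewrite setUC deg_first // symE.
move=> Eab; have N'a : [set y | remove_edge E [set a; b] a y] = [set y | E a y] :\ b.
  apply/setP=> y; rewrite !inE /remove_edge eq_set2 eqxx (negbTE (edge_neq Eab)).
  by rewrite orbF andbC.
by rewrite /deg N'a [in RHS](cardsD1 b) inE Eab.
Qed.

Lemma deg_gt0 x y : E x y -> 0 < deg E x.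
Proof. by move=> Exy; apply/card_gt0P; exists y; rewrite inE. Qed.

Lemma small_pair_remove_edge u v p q : E u v ->
  small_pair (remove_edge E [set u; v]) p q ->
  (p \in [set u; v]) = (q \in [set u; v]) -> small_pair E p q.
Proof.
move=> Euv /andP[pq small'] /esym; rewrite /small_pair pq /=.
have [p_in q_in|p_out /negbT q_out] := boolP (p \in [set u; v]); last first.
  move: small'; rewrite /remove_edge !deg_remove_edge_out //.
  by case/orP=> [->//|/and3P[/andP[-> _] -> ->]]; rewrite orbT.
have s_pq : [set p; q] = [set u; v].
  apply/eqP; rewrite eq_set2; move: p_in q_in pq.
  by do 2!case/set2P=> ->; rewrite ?eqxx ?orbT.
have Epq : E p q.
  by move/eqP: s_pq; rewrite eq_set2 => /orP[]/andP[/eqP-> /eqP->]; rewrite // symE.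
move: small'; rewrite /remove_edge s_pq eqxx andbF orbF !deg_remove_edge_end // Epq /=.
by have := deg_gt0 Epq; have := deg_gt0 (y := p) (etrans (symE q p) Epq); lia.
Qed.

End EdgeRemoval.

Local Open Scope ring_scope.

Definition separates (T : finType) (A : zmodType) (E : rel T) (c : T -> A) : Prop :=
  forall p q, small_pair E p q -> c p != c q.

Definition shift (T : finType) (A : zmodType) (c : T -> A) (s : {set T}) (t : A) :
  T -> A := fun w => c w + (if w \in s then t else 0).

Definition update (T : finType) (A : Type) (f : {set T} -> A) (s : {set T}) (t : A) :
  {set T} -> A := fun X => if X == s then t else f X.

Section Labeling.
Variables (T : finType) (A : finZmodType).
Implicit Types (E : rel T) (c : T -> A) (f : {set T} -> A).

Lemma wdeg_update E f u v t w : symmetric E -> irreflexive E -> E u v ->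
  wdeg E (update f [set u; v] t) w =
  wdeg (remove_edge E [set u; v]) f w + (if w \in [set u; v] then t else 0).
Proof.
move=> symE irrE Euv; rewrite /wdeg (bigID (fun y => [set w; y] == [set u; v])) /=.
rewrite addrC; congr (_ + _).
  by apply: eq_bigr => y /andP[_ /negbTE s_wy]; rewrite /update s_wy.
case: ifP => [w_in|/negbT w_out].
  have [o Ewo s_wo] : exists2 o, E w o & [set w; o] = [set u; v].
    by case/set2P: w_in => ->; [exists v | exists u; rewrite 1?symE // setUC].
  rewrite (big_pred1 o) => [|y]; first by rewrite /update s_wo eqxx.
  rewrite /= -s_wo eq_set2 eqxx (negbTE (edge_neq irrE Ewo)) orbF.
  by case: eqP => [->|]; rewrite ?Ewo ?andbF.
rewrite big_pred0 // => y; rewrite eq_set2.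
by move: w_out; rewrite !inE negb_or => /andP[/negbTE-> /negbTE->]; rewrite andbF.
Qed.

Hypothesis cardA : (2 * #|T| <= #|A| + 2)%N.

Lemma exists_shift_label c (s : {set T}) : #|s| = 2%N ->
  exists2 t : A, t != 0 & forall i w, i \notin s -> w \in s -> c i != c w + t.
Proof.
move=> card_s.
pose D : {set A} := [set c i - c w | i in ~: s, w in s].
have card_D : (#|D| <= #|~: s| * #|s|)%N.
  by rewrite /D curry_imset2X (leq_trans (leq_imset_card _ _)) // cardsX.
pose F : {set A} := 0 |: D.
have /card_gt0P[t] : (0 < #|~: F|)%N.
  move: card_D; have := cardsC F; have := cardsC s.
  (* [cardsC F] and [cardA] mention [#|A|] through different (convertible)
     finType instances, which [lia] would treat as unrelated atoms. *)
  rewrite cardsU1 card_s; set nA := #|A|; have : (2 * #|T| <= nA + 2)%N := cardA.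
  by case: (_ \notin _) => /=; lia.
rewrite inE => t_notin; exists t.
  by apply: contraNneq t_notin => ->; rewrite setU11.
move=> i w i_out w_in; apply: contraNneq t_notin => c_i.
by apply/setU1P; right; apply/imset2P; exists i w; rewrite ?inE // c_i addrAC subrr add0r.
Qed.

Lemma separates_remove_edge E c u v t : symmetric E -> irreflexive E -> E u v ->
  separates E c ->
  (forall i w, i \notin [set u; v] -> w \in [set u; v] -> c i != c w + t) ->
  separates (remove_edge E [set u; v]) (shift c [set u; v] t).
Proof.
move=> symE irrE Euv c_sep t_sep p q small'; rewrite /shift.
have [p_in|p_out] := boolP (p \in [set u; v]);
  have [q_in|q_out] := boolP (q \in [set u; v]).
- rewrite (inj_eq (addIr t)); apply/c_sep/(small_pair_remove_edge symE irrE Euv small').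
  by rewrite p_in q_in.
- by rewrite addr0 eq_sym; apply: t_sep.
- by rewrite addr0; apply: t_sep.
- rewrite !addr0; apply/c_sep/(small_pair_remove_edge symE irrE Euv small').
  by rewrite (negbTE p_out) (negbTE q_out).
Qed.

Lemma separates_no_edge E c : E =2 (fun _ _ => false) -> separates E c -> injective c.
Proof.
move=> noE c_sep p q c_pq; apply/eqP; apply: contraT => pq.
have deg0 x : deg E x = 0%N by apply: eq_card0 => y; rewrite inE noE.
by have := c_sep p q; rewrite /small_pair pq !deg0 c_pq !eqxx => /(_ isT).
Qed.


Lemma separating_irregular_labeling E c : symmetric E -> irreflexive E ->
  separates E c -> exists f, nowhere_zero E f /\ injective (fun w => c w + wdeg E f w).
Proof.
have [n] := ubnP #|arcs E|; elim: n => // n IHn in E c *.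
move=> lt_arcs symE irrE c_sep; case: (set_0Vmem (arcs E)) => [no_arcs|[[u v]]].
  have noE : E =2 (fun _ _ => false).
    move=> a b; apply/negbTE/negP => Eab.
    by have := in_set0 (a, b); rewrite -no_arcs inE Eab.
  exists (fun _ => 0); split=> [a b|]; first by rewrite noE.
  have wdeg0 w : wdeg E (fun _ => 0 : A) w = 0 by rewrite /wdeg big_pred0.
  move=> a b; rewrite /= !wdeg0 !addr0; exact: (separates_no_edge noE c_sep).
rewrite inE /= => Euv.
have card_uv : #|[set u; v]| = 2%N by rewrite cards2 (edge_neq irrE Euv).
have [t t_neq0 t_sep] := exists_shift_label c card_uv.
have [f' [f'_nz f'_inj]] := IHn (remove_edge E [set u; v]) (shift c [set u; v] t)
  (leq_trans (card_arcs_remove_edge Euv) lt_arcs) (remove_edge_sym symE _)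
  (remove_edge_irr irrE _) (separates_remove_edge symE irrE Euv c_sep t_sep).
exists (update f' [set u; v] t); split.
  move=> a b Eab; rewrite /update; case: ifP => // /negbT s_ab.
  by apply: f'_nz; rewrite /remove_edge Eab s_ab.
have wdegE w : c w + wdeg E (update f' [set u; v] t) w =
    shift c [set u; v] t w + wdeg (remove_edge E [set u; v]) f' w.
  by rewrite wdeg_update // /shift addrA addrAC.
by move=> a b; rewrite /= !wdegE => /f'_inj.
Qed.

End Labeling.

Section NoSmallComponent.
Variables (T : finType) (e : rel T).
Hypothesis symE : symmetric e.

Lemma card_component_le (S : {set T}) x :
  (forall a b, e a b -> a \in S -> b \in S) -> x \in S ->
  (#|[set y | connect e x y]| <= #|S|)%N.
Proof.
move=> S_closed x_in; apply/subset_leq_card/subsetP => y; rewrite inE => xy.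
by rewrite -(closed_connect (intro_closed (sym_connect_sym symE) S_closed) xy).
Qed.

Lemma deg1_neighbor_eq x y z : deg e x = 1%N -> e x y -> e x z -> z = y.
Proof.
move=> /eqP/cards1P[o N_x] exy exz.
have nb_o w : e x w -> w = o by move=> exw; apply/set1P; rewrite -N_x inE.
by rewrite (nb_o z exz) (nb_o y exy).
Qed.

Lemma no_small_component_separates (A : zmodType) (c : T -> A) :
  no_small_component e -> separates e c.
Proof.
move=> big p q /andP[_ /orP[/andP[/eqP p0 _]|/and3P[epq /eqP p1 /eqP q1]]].
  suff: (#|[set y | connect e p y]| <= #|[set p]|)%N.
    by rewrite cards1 leqNgt (leq_trans _ (big p)).
  apply: card_component_le (set11 p) => a b eab /set1P a_p.
  by have := deg_gt0 eab; rewrite a_p p0.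
suff: (#|[set y | connect e p y]| <= #|[set p; q]|)%N.
  by rewrite cards2 leqNgt (leq_trans _ (big p)) //; case: (p != q).
apply: card_component_le (set21 p q) => a b eab /set2P[] a_eq; subst a.
  by rewrite (deg1_neighbor_eq p1 epq eab) set22.
by rewrite symE in epq; rewrite (deg1_neighbor_eq q1 epq eab) set21.
Qed.
End NoSmallComponent.

Lemma sgstar_prop_double_order (T : finType) (e : rel T) :
  simple_graph e -> no_small_component e -> sgstar_prop e (2 * #|T|).
Proof.
move=> [symE irrE] big A card_A.
have cardA : (2 * #|T| <= #|A| + 2)%N by rewrite card_A leq_addr.
have [f [f_nz f_inj]] := separating_irregular_labeling cardA symE irrE
  (no_small_component_separates symE (fun _ => 0 : A) big).
by exists f; split=> // a b eq_ab; apply: f_inj; rewrite /= !add0r.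
Qed.

Lemma sgstar_prop_sg_prop (T : finType) (e : rel T) k : sgstar_prop e k -> sg_prop e k.
Proof. by move=> sgstar A card_A; have [f [_ f_irr]] := sgstar A card_A; exists f. Qed.

Lemma least_pos_exists (P : nat -> Prop) k : (0 < k)%N -> P k ->
  exists2 m, least_pos P m & (m <= k)%N.
Proof.
elim/ltn_ind: k => k IHk k_gt0 Pk.
have [[j [j_gt0 [lt_jk Pj]]]|no_smaller] :=
  classic (exists j, [/\ (0 < j)%N, (j < k)%N & P j]).
  have [m m_least le_mj] := IHk j lt_jk j_gt0 Pj.
  by exists m => //; apply: leq_trans le_mj (ltnW lt_jk).
exists k => //; do 2!split=> //; move=> j j_gt0 lt_jk Pj.
by apply: no_smaller; exists j.
Qed.

Theorem corollary1 (T : finType) (e : rel T) :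
  simple_graph e ->
  (0 < #|T|)%N ->
  no_small_component e ->
  exists s s' : nat,
    is_sg e s /\ is_sgstar e s' /\ (s <= s')%N /\ (s' <= 2 * #|T|)%N.
Proof.
move=> simple_e T_gt0 big.
have double_gt0 : (0 < 2 * #|T|)%N by rewrite muln_gt0.
have [s' s'_least le_s'] :=
  least_pos_exists double_gt0 (sgstar_prop_double_order simple_e big).
have [s s_least le_s] := least_pos_exists s'_least.1 (sgstar_prop_sg_prop s'_least.2.1).
by exists s, s'.
Qed.
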